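(* Let $n\ge2$, $c\ge1$, $d\ge r\ge1$ and $\epsilon>0$, and let $B=2\epsilon^{-2}\frac{d}{cr}\log n$. There is a random set $F$ (a probability distribution over sets) of $d/B$ functions $f:\{0,1\}^d\to\{0,1\}^B$ such that for every $x,y\in\{0,1\}^d$: (1) with probability 1 there is at least one $f\in F$ with $\operatorname{dist}(f(x),f(y))\le\operatorname{dist}(x,y)\,B/d$; (2) if $\operatorname{dist}(x,y)\ge cr$, then for every $f\in F$, with probability at least $1-1/n$, $\operatorname{dist}(f(x),f(y))\ge(1-\epsilon)cr\,B/d$.
   Context: $\operatorname{dist}$ denotes Hamming distance (number of differing coordinates) on binary vectors of the appropriate length. *)

From HB Require Import structures.
From mathcomp Require Import all_boot all_order ssralg ssrnum finalg.
From mathcomp Require Import reals exp.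
Set Implicit Arguments. Unset Strict Implicit. Unset Printing Implicit Defensive.
Import Order.TTheory GRing.Theory Num.Theory.
Local Open Scope ring_scope.

Definition bvec (m : nat) := {ffun 'I_m -> bool}.

Definition hdist (m : nat) (u v : bvec m) : nat := #|[set i | u i != v i]|.

(* a family of k functions {0,1}^d -> {0,1}^B (indexed, i.e. a multiset) *)
Definition hfamily (d B k : nat) := {ffun 'I_k -> {ffun bvec d -> bvec B}}.

Definition is_distr (R : realType) (T : finType) (P : {ffun T -> R}) : Prop :=
  (forall t, 0 <= P t) /\ \sum_(t : T) P t = 1.

Definition prob (R : realType) (T : finType) (P : {ffun T -> R}) (A : pred T) : R :=
  \sum_(t : T | A t) P t.

From mathcomp Require Import all_boot all_order ssralg ssrnum fingroup perm.
From mathcomp Require Import reals normedtype sequences derive exp.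
From mathcomp Require Import ring lra zify.
Import Order.TTheory GRing.Theory Num.Theory numFieldNormedType.Exports.
Set Implicit Arguments. Unset Strict Implicit. Unset Printing Implicit Defensive.
Local Open Scope ring_scope.

(* Draw a uniform random permutation s of the d coordinates, cut the permuted
   coordinates into k blocks of B, and let f_i read block i.  The distances along
   the k blocks add up to dist(x, y), so some block is at most the average one:
   this gives (1) for every s.  For (2), the distance along one block counts the
   points of a fixed B-set Q that s sends into the set D where x and y differ, a
   hypergeometric variable.  A permutation maps a given J into a set E with
   probability at most (|E|/d)^|J|, so its moment generating function is bounded
   as for B independent trials, and the Chernoff bound at parameter eps is
   exp(-eps^2 c r B / (2 d)) = 1/n by the choice of B. *)

Lemma card_setI_sum (T : finType) (A C : {set T}) :
  #|A :&: C| = (\sum_(x in A) (x \in C))%N.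
Proof.
rewrite (eq_bigr (fun x => if x \in C then 1 else 0)%N) // -big_mkcondr sum1dep_card.
by apply: eq_card => x; rewrite !inE.
Qed.

Section PermsInto.
Variable T : finType.
Implicit Types (E S : {set T}) (s : {perm T}).

Lemma card_permT : #|{perm T}| = #|T|`!.
Proof.
rewrite -cardsT -card_perm; apply: eq_card => s.
by rewrite inE; apply/esym/subsetP => t _; rewrite inE.
Qed.

Definition perms_into E S := [set s : {perm T} | S \subset s @^-1: E].

Lemma perms_into0 E : perms_into E set0 = setT.
Proof. by apply/setP => s; rewrite !inE sub0set. Qed.

Lemma card_perms_into_setU1_sym E S t t' : t \notin S -> t' \notin S ->
  #|perms_into E (t |: S)| = #|perms_into E (t' |: S)|.
Proof.
move=> tS t'S.
have fixS u : u \in S -> tperm t t' u = u.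
  by move=> uS; rewrite tpermD //; [move: tS | move: t'S]; apply: contraNneq => ->.
rewrite -(card_preimset _ (mulgI (tperm t t'))).
apply: eq_card => s; rewrite !inE !subUset !sub1set !inE permM tpermL.
congr (_ && _); apply/subsetP/subsetP => sSE u uS; have := sSE u uS;
  by rewrite !inE ?permM fixS.
Qed.

Lemma perms_intoU1 E S u :
  perms_into E (u |: S) = perms_into E S :&: [set s : {perm T} | s u \in E].
Proof. by apply/setP => s; rewrite !inE subUset sub1set inE andbC. Qed.

(* Double counting of the pairs (u, s) with u \notin S and s mapping u |: S into
   E; by the symmetry above all the u contribute equally. *)
Lemma card_perms_into_setU1 E S t : t \notin S ->
  ((#|T| - #|S|) * #|perms_into E (t |: S)| = (#|E| - #|S|) * #|perms_into E S|)%N.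
Proof.
move=> tS.
have -> : ((#|T| - #|S|) * #|perms_into E (t |: S)| =
           \sum_(u in ~: S) #|perms_into E (u |: S)|)%N.
  rewrite (eq_bigr (fun _ => #|perms_into E (t |: S)|)); last first.
    by move=> u; rewrite inE => uS; apply: card_perms_into_setU1_sym.
  by rewrite sum_nat_const -(cardsC S) addKn.
have count_image s : s \in perms_into E S -> #|~: S :&: s @^-1: E| = (#|E| - #|S|)%N.
  rewrite inE => /setIidPl sSE.
  by rewrite setIC -setDE cardsD setIC sSE (card_preimset _ (@perm_inj _ s)).
under eq_bigr do rewrite perms_intoU1 card_setI_sum.
rewrite exchange_big /= mulnC -sum_nat_const; apply: eq_bigr => s sS.
by rewrite -(count_image s) // card_setI_sum; apply: eq_bigr => u _; rewrite !inE.
Qed.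

Lemma card_perms_into_le E S :
  (#|perms_into E S| * #|T| ^ #|S| <= #|T|`! * #|E| ^ #|S|)%N.
Proof.
move cardS : #|S| => m; elim: m S cardS => [|m IHm] S cardS.
  move/eqP: cardS; rewrite cards_eq0 => /eqP ->.
  by rewrite perms_into0 cardsT card_permT !expn0 !muln1.
have [t tS] : exists t, t \in S by apply/card_gt0P; rewrite cardS.
have cardS' : #|S :\ t| = m by move: (cardsD1 t S); rewrite tS cardS => -[].
have recS := @card_perms_into_setU1 E (S :\ t) t (negbT (setD11 t S)).
rewrite setD1K // cardS' in recS.
have m_lt_T : (m < #|T|)%N by rewrite -cardS max_card.
have E_le_T : (#|E| <= #|T|)%N by apply: max_card.
have IH := IHm _ cardS'.
set A := #|perms_into E S| in recS *; set A' := #|perms_into E (S :\ t)| in recS IH.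
set N := #|T| in recS IH m_lt_T E_le_T *; set e := #|E| in recS IH E_le_T *.
have ratio_le : ((e - m) * N <= e * (N - m))%N by nia.
rewrite -(@leq_pmul2r (N - m)) ?subn_gt0 // !expnSr.
have -> : (A * (N ^ m * N) * (N - m) = (e - m) * N * (A' * N ^ m))%N.
  by rewrite mulnC !mulnA recS; ring.
rewrite [X in (_ <= X)%N](_ : _ = (e * (N - m)) * (N`! * e ^ m))%N; last by ring.
exact: leq_mul.
Qed.

End PermsInto.

Section PermMGF.
Variables (R : realFieldType) (T : finType).

Lemma sum_subsets_expr (A : {set T}) (x : R) :
  \sum_(J : {set T} | J \subset A) x ^+ #|J| = (1 + x) ^+ #|A|.
Proof.
pose F t : R := if t \in A then x else 0.
have prodF (J : {set T}) :
    \prod_t (if t \in J then F t else 1) = if J \subset A then x ^+ #|J| else 0.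
  rewrite -big_mkcond; case: ifP => [/subsetP JA | /negbT/subsetPn [t tJ tA]].
    by rewrite -prodr_const; apply: eq_bigr => t /JA; rewrite /F => ->.
  by rewrite (bigD1 t) //= /F (negPf tA) mul0r.
rewrite big_mkcond; under eq_bigr do rewrite -prodF.
transitivity (\prod_t (F t + 1)); first by rewrite (bigA_distr 1 +%R).
rewrite -prodr_const [RHS]big_mkcond.
by apply: eq_bigr => t _; rewrite /F; case: ifP; rewrite ?add0r // addrC.
Qed.

Lemma card_perms_into_ler (E S : {set T}) :
  (#|perms_into E S|%:R : R) <= #|T|`!%:R * (#|E|%:R / #|T|%:R) ^+ #|S|.
Proof.
have [S0 | S_gt0] := posnP #|S|.
  by rewrite S0 expr0 mulr1 ler_nat -card_permT max_card.
have T_gt0 : (0 < #|T|)%N by apply: leq_trans S_gt0 (max_card _).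
rewrite expr_div_n mulrA ler_pdivlMr ?exprn_gt0 ?ltr0n //.
by rewrite -!natrX -!natrM ler_nat card_perms_into_le.
Qed.

(* Expand (1 + v) ^+ #|X| over the subsets of X: a subset J of Q lies in s @^-1: E
   for at most a fraction (#|E| / #|T|) ^+ #|J| of the permutations s. *)
Lemma sum_perm_expr_le (Q E : {set T}) (v : R) : 0 <= v ->
  \sum_(s : {perm T}) (1 + v) ^+ #|Q :&: s @^-1: E| <=
  #|T|`!%:R * (1 + v * #|E|%:R / #|T|%:R) ^+ #|Q|.
Proof.
move=> v_ge0.
under eq_bigr do rewrite -sum_subsets_expr.
under eq_bigr do under eq_bigl do rewrite subsetI.
under eq_bigr do rewrite big_mkcondr /=.
rewrite exchange_big /= -sum_subsets_expr mulr_sumr; apply: ler_sum => J _.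
rewrite -big_mkcond /= sumr_const (eq_card (B := perms_into E J)); last first.
  by move=> s; rewrite inE.
rewrite -[v ^+ _ *+ _]mulr_natl -[v * _ / _]mulrA exprMn mulrCA.
rewrite [X in X <= _]mulrC ler_wpM2l ?exprn_ge0 //.
exact: card_perms_into_ler.
Qed.

End PermMGF.

Lemma expRN_le_quadratic (R : realType) (x : R) : 0 <= x ->
  expR (- x) <= 1 - x + x ^+ 2 / 2.
Proof.
move=> x_ge0.
pose g (y : R) := expR y * (1 - y + y ^+ 2 / 2).
have dg (y : R) : is_derive y 1 g (expR y * (y ^+ 2 / 2)).
  by apply: is_derive_eq; rewrite !scaler0 !add0r /GRing.scale /= !mulr1; field.
have g_ge1 : g 0 <= g x.
  apply: (@ger0_derive1_ndecr _ g 0 x) => //.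
  - move=> y _; rewrite derive1E (@derive_val _ _ _ _ _ _ _ (dg y)).
    by rewrite mulr_ge0 ?expR_ge0 // divr_ge0 ?sqr_ge0.
  - by apply: derivable_within_continuous => y _.
rewrite /g expR0 mul1r subr0 expr0n /= mul0r addr0 in g_ge1.
by rewrite expRN -[_^-1]mulr1 ler_pdivrMl ?expR_gt0.
Qed.

Lemma chernoff_hypergeom_exponent (R : realType) (n d B h : nat) (m eps : R) :
  (0 < n)%N -> 0 < eps -> 0 < m -> m <= h%:R -> (h <= d)%N ->
  B%:R = 2 / eps ^+ 2 * (d%:R / m) * ln n%:R ->
  (1 + (expR eps - 1) * (d%:R - h%:R) / d%:R) ^+ B
    <= expR (eps * (B%:R - (1 - eps) * m * B%:R / d%:R)) / n%:R.
Proof.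
(* With a = exp(-eps), the base is exp(eps) (1 - (1 - a) h / d); then
   1 - a >= eps - eps^2/2 leaves the exponent -eps^2 M / 2 = - ln n. *)
move=> n_gt0 eps_gt0 m_gt0 m_le_h h_le_d hB.
have h_le_d' : h%:R <= d%:R :> R by rewrite ler_nat.
have d_gt0 : 0 < d%:R :> R by apply: lt_le_trans h_le_d'; apply: lt_le_trans m_le_h.
set M := m * B%:R / d%:R; pose K : R := h%:R * B%:R / d%:R.
have ln_n : ln n%:R = eps ^+ 2 * M / 2 by rewrite /M hB; field; rewrite !gt_eqF.
set a := expR (- eps).
have a_lower : eps - eps ^+ 2 / 2 <= 1 - a.
  by have := expRN_le_quadratic (ltW eps_gt0); rewrite -/a; lra.
have a_le1 : a <= 1 by rewrite expR_le1 oppr_le0 ltW.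
set z := (1 - a) * h%:R / d%:R.
have z_le1 : z <= 1.
  by rewrite /z ler_pdivrMr // mul1r; have := expR_ge0 (- eps); rewrite -/a; nra.
have W_eq : 1 + (expR eps - 1) * (d%:R - h%:R) / d%:R = expR eps * (1 - z).
  by rewrite /z /a expRN; field; rewrite !gt_eqF ?expR_gt0.
have Bz_eq : B%:R * z = (1 - a) * K by rewrite /z /K; field; rewrite gt_eqF.
have M_le_K : M <= K.
  by rewrite /M /K ler_pM2r ?invr_gt0 //; exact: ler_wpM2r.
have M_ge0 : 0 <= M by rewrite /M divr_ge0 ?mulr_ge0 // ltW.
rewrite W_eq exprMn -expRM_natl.
apply: (le_trans (y := expR (B%:R * eps) * expR (B%:R * - z))).
  rewrite ler_wpM2l ?expR_ge0 // expRM_natl lerXn2r ?nnegrE ?expR_ge0 ?subr_ge0 //.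
  by have := expR_ge1Dx (- z); lra.
rewrite -expRD -(lnK (_ : 0 < n%:R)) ?posrE ?ltr0n // -expRN -expRD ler_expR.
have tauE : (1 - eps) * m * B%:R / d%:R = (1 - eps) * M by rewrite /M; ring.
rewrite tauE ln_n.
have : 0 <= (1 - a) * (K - M) by rewrite mulr_ge0 ?subr_ge0.
have : 0 <= ((1 - a) - (eps - eps ^+ 2 / 2)) * M by rewrite mulr_ge0 ?subr_ge0.
nra.
Qed.

Section PermChernoff.
Variables (R : realType) (T : finType).

Lemma card_perms_meet_lt_le (Q D : {set T}) (lam tau : R) : 0 <= lam ->
  #|[set s : {perm T} | #|Q :&: s @^-1: D|%:R < tau]|%:R
      * expR (lam * (#|Q|%:R - tau))
    <= #|T|`!%:R * (1 + (expR lam - 1) * #|~: D|%:R / #|T|%:R) ^+ #|Q|.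
Proof.
move=> lam_ge0.
have v_ge0 : 0 <= expR lam - 1 by have := expR_ge1Dx lam; lra.
apply: le_trans (sum_perm_expr_le Q (~: D) v_ge0).
rewrite [1 + _]addrC subrK -sum1_card natr_sum mulr_suml big_mkcond /=.
apply: ler_sum => s _; case: ifP => [|_]; last by rewrite exprn_ge0 ?expR_ge0.
rewrite inE mul1r -expRM_natl ler_expR mulrC => meet_lt; apply: ler_wpM2r => //.
rewrite -(cardsID (s @^-1: D) Q) natrD preimsetC -setDE.
lra.
Qed.

Lemma perm_hypergeom_lower_tail (Q D : {set T}) (n : nat) (m eps : R) :
  (0 < n)%N -> 0 < eps -> 0 < m -> m <= #|D|%:R ->
  #|Q|%:R = 2 / eps ^+ 2 * (#|T|%:R / m) * ln n%:R ->
  #|[set s : {perm T} | #|Q :&: s @^-1: D|%:R < (1 - eps) * m * #|Q|%:R / #|T|%:R]|%:R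
    / #|{perm T}|%:R <= (n%:R : R)^-1.
Proof.
move=> n_gt0 eps_gt0 m_gt0 m_le_D hQ.
have tail := card_perms_meet_lt_le Q D ((1 - eps) * m * #|Q|%:R / #|T|%:R) (ltW eps_gt0).
have := chernoff_hypergeom_exponent n_gt0 eps_gt0 m_gt0 m_le_D (max_card D) hQ.
have -> : (#|T|%:R - #|D|%:R : R) = #|~: D|%:R by rewrite -(cardsC D) natrD; ring.
move=> expo.
set E := expR _ in tail expo.
rewrite card_permT ler_pdivrMr ?ltr0n ?fact_gt0 // -(ler_pM2r (expR_gt0 _ : 0 < E)).
apply: le_trans tail _.
rewrite (_ : _ * _ * E = #|T|`!%:R * (E / n%:R)); last by ring.
by rewrite ler_pM2l ?ltr0n ?fact_gt0.
Qed.

End PermChernoff.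

Section UniformImage.
Variables (R : realType) (S U : finType) (f : S -> U).

Definition unif_image : {ffun U -> R} :=
  [ffun u => #|[set s | f s == u]|%:R / #|S|%:R].

Lemma prob_unif_image (A : pred U) :
  prob unif_image A = #|[set s | A (f s)]|%:R / #|S|%:R.
Proof.
rewrite /prob; under eq_bigr do rewrite ffunE.
rewrite -mulr_suml -natr_sum; congr (_%:R / _).
rewrite -sum1dep_card (partition_big f A) //=; apply: eq_bigr => u Au.
rewrite sum1dep_card; apply: eq_card => s; rewrite !inE.
by case: eqP => [->|]; rewrite ?Au ?andbF.
Qed.

Hypothesis S_gt0 : (0 < #|S|)%N.

Lemma prob_unif_image_eq1 (A : pred U) :
  (forall s, A (f s)) -> prob unif_image A = 1.
Proof.
move=> Af; rewrite prob_unif_image (eq_card (B := S)) => [|s]; last by rewrite inE Af.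
by rewrite mulfV // pnatr_eq0 -lt0n.
Qed.

Lemma unif_image_distr : is_distr unif_image.
Proof.
split => [u | ]; first by rewrite ffunE divr_ge0.
by have := prob_unif_image_eq1 (A := predT) (fun=> isT); rewrite /prob.
Qed.

Lemma prob_unif_image_ge (A : pred U) (p : R) :
  #|[set s | ~~ A (f s)]|%:R / #|S|%:R <= p -> 1 - p <= prob unif_image A.
Proof.
rewrite prob_unif_image; set Y := [set s | ~~ A (f s)].
have -> : [set s | A (f s)] = ~: Y by apply/setP => s; rewrite !inE negbK.
rewrite [#|~: Y|]cardsCs setCK natrB ?max_card // mulrBl mulfV.
  by move=> Y_le; lra.
by rewrite pnatr_eq0 -lt0n.
Qed.

End UniformImage.

Lemma hdist_sum m (u v : bvec m) : hdist u v = (\sum_i (u i != v i))%N.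
Proof. by rewrite /hdist -sum1dep_card big_mkcond. Qed.

Lemma exists_le_mean k (a : 'I_k -> nat) : (0 < k)%N ->
  exists i, (a i * k <= \sum_j a j)%N.
Proof.
case: k a => // k a _; case: (@arg_minnP _ ord0 predT a isT) => i _ min_i.
exists i; rewrite mulnC -[X in (X * _)%N]card_ord -sum_nat_const.
by apply: leq_sum => j _; apply: min_i.
Qed.

Lemma ord_prod_bij k B d : (k * B = d)%N -> {phi : 'I_k * 'I_B -> 'I_d | bijective phi}.
Proof.
move=> kBd; have card_kB : #|{: 'I_k * 'I_B}| = d by rewrite card_prod !card_ord.
exists (cast_ord card_kB \o enum_rank); apply: inj_card_bij.
  exact: inj_comp (@cast_ord_inj _ _ _) (@enum_rank_inj _).
by rewrite card_kB card_ord.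
Qed.

Section BlockFamily.
Variables (d B k : nat) (phi : 'I_k * 'I_B -> 'I_d).
Hypothesis phi_bij : bijective phi.

Definition block_family (s : {perm 'I_d}) : hfamily d B k :=
  [ffun i => [ffun x : bvec d => [ffun j => x (s (phi (i, j)))]]].

Definition block (i : 'I_k) : {set 'I_d} := [set phi (i, j) | j : 'I_B].

Let phi_inj : injective phi := bij_inj phi_bij.

Let block_inj i : injective (fun j => phi (i, j)).
Proof. by move=> j j' /phi_inj[]. Qed.

Lemma card_block i : #|block i| = B.
Proof. by rewrite card_imset ?card_ord. Qed.

Lemma hdist_block_family s i (x y : bvec d) :
  hdist (block_family s i x) (block_family s i y)
    = #|block i :&: s @^-1: [set u | x u != y u]|.
Proof.
rewrite hdist_sum card_setI_sum big_imset /=; last by move=> j j' _ _ /block_inj.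
by apply: eq_bigr => j _; rewrite !ffunE !inE.
Qed.

Lemma sum_hdist_block_family s (x y : bvec d) :
  (\sum_i hdist (block_family s i x) (block_family s i y))%N = hdist x y.
Proof.
under eq_bigr do rewrite hdist_sum.
rewrite pair_big hdist_sum (reindex_inj (@perm_inj _ s)) (reindex phi) /=.
  by apply: eq_bigr => -[i j] _; rewrite !ffunE.
exact: onW_bij.
Qed.

Lemma exists_block_family_le (R : realType) s (x y : bvec d) :
  (0 < d)%N -> (k * B = d)%N ->
  exists i, (hdist (block_family s i x) (block_family s i y))%:R
              <= (hdist x y)%:R * B%:R / d%:R :> R.
Proof.
move=> d_gt0 kBd.
have k_gt0 : (0 < k)%N by move: d_gt0; rewrite -kBd muln_gt0 => /andP[].
have [i le_i] :=
  exists_le_mean (fun i => hdist (block_family s i x) (block_family s i y)) k_gt0.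
exists i; rewrite ler_pdivlMr ?ltr0n // -!natrM ler_nat -[X in (_ * X <= _)%N]kBd.
by rewrite mulnA leq_mul2r -(sum_hdist_block_family s) le_i orbT.
Qed.

End BlockFamily.

Theorem lemma4 (R : realType) (n d B k : nat) (c r eps : R) :
  (2 <= n)%N -> 1 <= c -> 1 <= r -> r <= d%:R -> 0 < eps ->
  B%:R = 2 / eps ^+ 2 * (d%:R / (c * r)) * ln (n%:R : R) ->
  (k * B)%N = d ->
  exists P : {ffun hfamily d B k -> R}, is_distr P /\
    forall x y : bvec d,
      prob P (fun F => [exists i : 'I_k,
                 ((hdist (F i x) (F i y))%:R : R)
                   <= (hdist x y)%:R * B%:R / d%:R]) = 1
      /\ (c * r <= (hdist x y)%:R ->
          forall i : 'I_k,
            1 - (n%:R : R)^-1 <=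
            prob P (fun F => (1 - eps) * c * r * B%:R / d%:R
                               <= ((hdist (F i x) (F i y))%:R : R))).
Proof.
move=> n_ge2 c_ge1 r_ge1 r_le_d eps_gt0 hB kBd.
have d_gt0 : (0 < d)%N by rewrite -(ltr0n R); lra.
have perms_gt0 : (0 < #|{perm 'I_d}|)%N by rewrite card_permT fact_gt0.
have [phi phi_bij] := ord_prod_bij kBd.
exists (unif_image R (block_family phi)); split; first exact: unif_image_distr.
move=> x y; split => [|cr_le i].
  by apply: prob_unif_image_eq1 => // s; apply/existsP; apply: exists_block_family_le.
apply: prob_unif_image_ge => //.
have cr_gt0 : 0 < c * r by rewrite mulr_gt0 //; lra.
have := @perm_hypergeom_lower_tail R _ (block phi i) [set u | x u != y u] n (c * r) eps.
rewrite card_block // !card_ord [(1 - eps) * (c * r)]mulrA.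
move/(_ (ltnW n_ge2) eps_gt0 cr_gt0 cr_le hB) => tail.
by under eq_finset => s do rewrite hdist_block_family // -ltNge.
Qed.
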